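(* There exist absolute constants $c,C>0$ such that for every $n\in\mathbb{N}$ there exists a set $S\subseteq\mathbb{F}_2^n$ with $c\sqrt{n}\le|\Delta(S)|\le C\sqrt{n}$ and $\rho(S)=2$.
   Context: For $x,y\in\mathbb{F}_2^n$, the Hamming distance is $d_H(x,y)=\#\{i:x_i\neq y_i\}$, and for $S\subseteq\mathbb{F}_2^n$, $\Delta(S)=\{d_H(x,y):x,y\in S\}$. A set $R\subseteq\mathbb{F}_2^n$ is called rainbow if the $\binom{|R|}{2}$ Hamming distances $d_H(x,y)$ over unordered pairs of distinct points $x,y\in R$ are pairwise distinct. $\rho(S)$ denotes the maximum size of a rainbow subset $R\subseteq S$. *)

From mathcomp Require Import all_boot.
From Stdlib Require Import Reals.
Set Implicit Arguments. Unset Strict Implicit. Unset Printing Implicit Defensive.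

Definition F2n (n : nat) := {ffun 'I_n -> bool}.

Definition hamming (n : nat) (x y : F2n n) : nat := #|[set i | x i != y i]|.

(* |Delta(S)| : number of distinct values d_H(x,y), x,y in S (x = y allowed). *)
Definition card_Delta (n : nat) (S : {set F2n n}) : nat :=
  size (undup [seq hamming x y | x <- enum S, y <- enum S]).

Definition rainbow (n : nat) (R : {set F2n n}) : bool :=
  [forall x1 in R, forall y1 in R, forall x2 in R, forall y2 in R,
     [&& x1 != y1, x2 != y2 & hamming x1 y1 == hamming x2 y2] ==>
     ([set x1; y1] == [set x2; y2])].

Definition rho (n : nat) (S : {set F2n n}) : nat :=
  \max_(R : {set F2n n} | (R \subset S) && rainbow R) #|R|.

From mathcomp Require Import all_boot zify.
From Stdlib Require Import Reals Lra.

Set Implicit Arguments.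
Unset Strict Implicit.
Unset Printing Implicit Defensive.

(* Take k ~ sqrt n points x_0, ..., x_{k-1} with d(x_i, x_j) = g (max i j)
   for an injective positive g.  Then Delta consists of 0 and the k - 1 values
   of g, and among any three of the points the one of largest index is
   equidistant from the other two, so no rainbow subset has three points.
   With o >= k - 1, let x_j be the indicator of [0, j) together with the block
   [o + C(j,2), o + C(j,2) + j); these blocks are pairwise disjoint and lie
   beyond every prefix, so d(x_i, x_j) = (j - i) + i + j = 2 j for i < j.
   This needs n >= k - 1 + C(k,2), which holds for k = max 2 (isqrt n) unless
   n = 1, where two points suffice. *)

Lemma hammingC n (x y : F2n n) : hamming x y = hamming y x.
Proof. by apply: eq_card => i; rewrite !inE eq_sym. Qed.

Lemma hammingxx n (x : F2n n) : hamming x x = 0.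
Proof. by apply/eqP; rewrite cards_eq0; apply/eqP/setP => i; rewrite !inE eqxx. Qed.

Lemma card_Delta_pivot n (S : {set F2n n}) (x0 : F2n n) :
  (forall x y, x \in S -> y \in S -> exists2 z, z \in S & hamming x y = hamming x0 z) ->
  {in S &, injective (hamming x0)} -> x0 \in S -> card_Delta S = #|S|.
Proof.
move=> pivot inj_x0 Sx0; rewrite /card_Delta cardE -(size_map (hamming x0)).
apply/perm_size/uniq_perm; rewrite ?undup_uniq //.
  by rewrite map_inj_in_uniq ?enum_uniq // => y z; rewrite !mem_enum; apply: inj_x0.
move=> d; rewrite mem_undup; apply/allpairsP/mapP => [[[x y]] | [z]] /=.
  rewrite !mem_enum => -[Sx Sy ->]; have [z Sz ->] := pivot x y Sx Sy.
  by exists z; rewrite ?mem_enum.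
by rewrite mem_enum => Sz ->; exists (x0, z); rewrite !mem_enum.
Qed.

Lemma rainbow_set2 n (u v : F2n n) : rainbow [set u; v].
Proof.
apply/forall_inP => x1 /set2P [] -> ; apply/forall_inP => y1 /set2P [] -> ;
apply/forall_inP => x2 /set2P [] -> ; apply/forall_inP => y2 /set2P [] -> ;
apply/implyP => /and3P [h1 h2 _]; rewrite ?eqxx // ?(eq_sym v u) in h1 h2 *;
by rewrite ?eqxx ?(setUC [set v]) ?(setUC [set u]).
Qed.

Lemma rainbow_hamming_neq n (R : {set F2n n}) (x y z : F2n n) :
  rainbow R -> x \in R -> y \in R -> z \in R -> x != y -> x != z -> y != z ->
  hamming x y != hamming x z.
Proof.
move=> /forall_inP rainbowR Rx Ry Rz xy xz yz; apply/eqP => dxy_dxz.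
move: rainbowR => /(_ _ Rx)/forall_inP/(_ _ Ry)/forall_inP/(_ _ Rx)/forall_inP/(_ _ Rz).
rewrite xy xz dxy_dxz eqxx => /implyP/(_ isT)/eqP pairs_eq.
have : y \in [set x; z] by rewrite -pairs_eq set22.
by case/set2P => y_eq; rewrite y_eq eqxx in xy yz.
Qed.

Lemma rho_ge2 n (S : {set F2n n}) (u v : F2n n) :
  u \in S -> v \in S -> u != v -> 2 <= rho S.
Proof.
move=> Su Sv uv.
have := @leq_bigmax_cond _ (fun R : {set F2n n} => (R \subset S) && rainbow R)
  (fun R => #|R|) [set u; v].
rewrite cards2 uv; apply.
by rewrite rainbow_set2 andbT; apply/subsetP => w /set2P [] ->.
Qed.

Lemma rho_le2 n (S : {set F2n n}) :
  (forall x y z, x \in S -> y \in S -> z \in S -> x != y -> y != z -> z != x ->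
     [|| hamming x y == hamming x z, hamming y z == hamming y x
       | hamming z x == hamming z y]) ->
  rho S <= 2.
Proof.
move=> isosceles; apply/bigmax_leqP => R /andP [/subsetP RS rainbowR].
rewrite leqNgt; apply/card_gt2P => -[x [y [z [[Rx Ry Rz] [xy yz zx]]]]].
case/or3P: (isosceles x y z (RS _ Rx) (RS _ Ry) (RS _ Rz) xy yz zx); apply/negP.
- by apply: (rainbow_hamming_neq rainbowR Rx Ry Rz xy _ yz); rewrite eq_sym.
- by apply: (rainbow_hamming_neq rainbowR Ry Rz Rx yz _ zx); rewrite eq_sym.
- by apply: (rainbow_hamming_neq rainbowR Rz Rx Ry zx _ xy); rewrite eq_sym.
Qed.

Section Chain.

Variables (n k : nat) (x : 'I_k -> F2n n) (g : nat -> nat).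
Hypothesis hamming_x : forall i j : 'I_k, i < j -> hamming (x i) (x j) = g j.
Hypothesis g_gt0 : forall j, 0 < j < k -> 0 < g j.

Lemma hamming_chain (i j : 'I_k) : i != j -> hamming (x i) (x j) = g (maxn i j).
Proof.
case: (ltngtP i j) => [ij | ji | /val_inj ->]; last by rewrite eqxx.
- by rewrite hamming_x // (maxn_idPr (ltnW ij)).
- by rewrite hammingC hamming_x // (maxn_idPl (ltnW ji)).
Qed.

Lemma g_maxn_gt0 (i j : 'I_k) : i != j -> 0 < g (maxn i j).
Proof.
move=> ij; apply: g_gt0; move: ij; rewrite -val_eqE /=.
by have := ltn_ord i; have := ltn_ord j; lia.
Qed.

Lemma chain_inj : injective x.
Proof.
move=> i j xij; apply/eqP; apply: contraT => ij.
by have := g_maxn_gt0 ij; rewrite -hamming_chain // xij hammingxx.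
Qed.

Lemma rho_chain : 1 < k -> rho [set x i | i : 'I_k] = 2.
Proof.
move=> k_gt1; apply/anti_leq/andP; split.
  apply: rho_le2 => _ _ _ /imsetP [a _ ->] /imsetP [b _ ->] /imsetP [c _ ->].
  move=> xab xbc xca; have [ab bc ca] : [/\ a != b, b != c & c != a].
    by split; [move: xab | move: xbc | move: xca]; apply: contra_neq => ->.
  rewrite !hamming_chain // 1?eq_sym //.
  have : [|| maxn a b == maxn a c, maxn b c == maxn b a | maxn c a == maxn c b].
    by move: ab bc ca; rewrite -!val_eqE /=; lia.
  by case/or3P => /eqP ->; rewrite eqxx ?orbT.
apply: (@rho_ge2 _ _ (x (Ordinal (ltnW k_gt1))) (x (Ordinal k_gt1))); rewrite ?imset_f //.
by rewrite (inj_eq chain_inj) -val_eqE.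
Qed.

Hypothesis g_inj : {in [pred j | 0 < j < k] &, injective g}.

Lemma card_Delta_chain : 0 < k -> card_Delta [set x i | i : 'I_k] = k.
Proof.
move=> k_gt0; set i0 := Ordinal k_gt0.
have hamming_x0 a : hamming (x i0) (x a) = if a == i0 then 0 else g a.
  case: eqP => [-> | /eqP]; first exact: hammingxx.
  by rewrite -val_eqE /= -lt0n => a_gt0; rewrite hamming_x.
have card_x : #|[set x i | i : 'I_k]| = k.
  by rewrite card_imset ?card_ord //; apply: chain_inj.
rewrite -[RHS]card_x (@card_Delta_pivot _ _ (x i0)) ?imset_f //.
- move=> _ _ /imsetP [a _ ->] /imsetP [b _ ->].
  have [-> | ab] := eqVneq a b; first by exists (x i0); rewrite ?imset_f ?hammingxx.
  set m := if a < b then b else a.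
  have m_val : maxn a b = m by rewrite /m /maxn; case: ifP.
  have m_gt0 : 0 < maxn a b by move: ab; rewrite -val_eqE /=; lia.
  exists (x m); first exact: imset_f.
  by rewrite hamming_chain // hamming_x0 -val_eqE /= eqn0Ngt -m_val m_gt0.
- move=> _ _ /imsetP [a _ ->] /imsetP [b _ ->]; rewrite !hamming_x0.
  have pos c : c != i0 -> 0 < g c.
    by rewrite -val_eqE /= -lt0n => c_gt0; apply: g_gt0; rewrite c_gt0 ltn_ord.
  case: (eqVneq a i0) => [-> | a0]; case: (eqVneq b i0) => [-> | b0] //.
  + by move=> gb0; have := pos b b0; rewrite -gb0.
  + by move=> ga0; have := pos a a0; rewrite ga0.
  + move: a0 b0; rewrite -!val_eqE /= -!lt0n => a_gt0 b_gt0 /g_inj.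
    by rewrite !inE a_gt0 b_gt0 !ltn_ord => /(_ isT isT) /val_inj ->.
Qed.

End Chain.

Lemma card_set_ord n (p : pred nat) : #|[set c : 'I_n | p c]| = count p (iota 0 n).
Proof.
rewrite -val_enum_ord count_map cardsE cardE /enum_mem size_filter.
by rewrite (@eq_filter _ _ predT) // filter_predT; apply: eq_count.
Qed.

Lemma count_iota_interval a b n :
  count (fun c => a <= c < b) (iota 0 n) = minn n b - minn n a.
Proof.
elim: n => [|n IHn]; first by rewrite !min0n.
rewrite -addn1 iotaD count_cat IHn /= add0n addn0.
by case: (boolP (a <= n < b)); lia.
Qed.

Lemma count_predU_disjoint T (a b : pred T) (s : seq T) :
  (forall t, a t -> ~~ b t) -> count (predU a b) s = count a s + count b s.
Proof.
move=> ab; rewrite -count_predUI (@eq_count _ (predI a b) pred0) ?count_pred0 ?addn0//.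
by move=> t /=; apply/negbTE; rewrite negb_and; case: (boolP (a t)) => // /ab.
Qed.

Definition stair (o j c : nat) : bool :=
  (c < j) || (o + 'C(j, 2) <= c < o + 'C(j, 2) + j).

Definition staircase (n o j : nat) : F2n n := [ffun c : 'I_n => stair o j c].

Lemma hamming_staircase n o i j : i < j <= o -> o + 'C(j.+1, 2) <= n ->
  hamming (staircase n o i) (staircase n o j) = j.*2.
Proof.
move=> /andP [ij jo] bound_n.
have blocks_apart : 'C(i.+1, 2) <= 'C(j, 2) by apply: leq_bin2l.
rewrite !binS !bin1 in bound_n blocks_apart.
have -> : hamming (staircase n o i) (staircase n o j) =
    count (fun c => stair o i c != stair o j c) (iota 0 n).
  by rewrite -card_set_ord; apply: eq_card => c; rewrite !inE !ffunE.
set shared := fun c => i <= c < j.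
set block_i := fun c => o + 'C(i, 2) <= c < o + 'C(i, 2) + i.
set block_j := fun c => o + 'C(j, 2) <= c < o + 'C(j, 2) + j.
rewrite (@eq_count _ _ (predU shared (predU block_i block_j))); last first.
  by move=> c; rewrite /= /stair /shared /block_i /block_j; apply/idP/idP; lia.
rewrite !count_predU_disjoint => [|c|c]; rewrite /shared /block_i /block_j /=; try lia.
by rewrite !count_iota_interval; lia.
Qed.

Lemma exists_chain_set n : 0 < n -> exists S : {set F2n n},
  card_Delta S = maxn 2 (Nat.sqrt n) /\ rho S = 2.
Proof.
move=> n_gt0; have [n1 | n_gt1] := eqVneq n 1.
  rewrite n1; exists [set [ffun _ : 'I_1 => j == 1 :> nat] | j : 'I_2].
  have hamming_bits (i j : 'I_2) : i < j ->
      hamming [ffun _ : 'I_1 => i == 1 :> nat] [ffun _ => j == 1 :> nat] = 1.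
    move=> ij; have [-> ->] : (i : nat) = 0 /\ (j : nat) = 1 by have := ltn_ord j; lia.
    by rewrite -[RHS](card_ord 1); apply: eq_card => c; rewrite !inE !ffunE.
  have -> : maxn 2 (Nat.sqrt 1) = 2 by [].
  split; [apply: (card_Delta_chain (g := fun=> 1) hamming_bits)
         | apply: (rho_chain (g := fun=> 1) hamming_bits)] => //.
  by move=> j1 j2; rewrite !inE; lia.
have [sqrt_le _] := Nat.sqrt_spec n (Nat.le_0_l n).
set k := maxn 2 (Nat.sqrt n).
have bound_n : k.-1 + 'C(k, 2) <= n.
  rewrite /k; case: (leqP 2 (Nat.sqrt n)) => [s_ge2 | s_lt2].
    have : 'C(Nat.sqrt n, 2) <= Nat.sqrt n * (Nat.sqrt n).-1.
      by rewrite bin2 leq_half_double -addnn; apply/leqW/leq_addr.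
    by move: s_ge2 sqrt_le; nia.
  by rewrite binn; lia.
exists [set staircase n k.-1 j | j : 'I_k].
have hamming_x (i j : 'I_k) :
    i < j -> hamming (staircase n k.-1 i) (staircase n k.-1 j) = j.*2.
  move=> ij; apply: hamming_staircase; first by have := ltn_ord j; lia.
  by apply: leq_trans bound_n; rewrite leq_add2l; apply: leq_bin2l.
rewrite (card_Delta_chain hamming_x) ?(rho_chain hamming_x) /k //; try lia.
by move=> j1 j2 _ _; apply: double_inj.
Qed.

Lemma INR_sqrt_le n : (INR (Nat.sqrt n) <= sqrt (INR n))%R.
Proof.
rewrite -(sqrt_square (INR (Nat.sqrt n))); last exact: pos_INR.
apply: sqrt_le_1_alt; rewrite -mult_INR; apply: le_INR.
by have [] := Nat.sqrt_spec n (Nat.le_0_l n).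
Qed.

Lemma sqrt_le_INR_sqrt_succ n : (sqrt (INR n) <= INR (Nat.sqrt n).+1)%R.
Proof.
rewrite -(sqrt_square (INR (Nat.sqrt n).+1)); last exact: pos_INR.
apply: sqrt_le_1_alt; rewrite -mult_INR; apply: le_INR.
by have [_ /Nat.lt_le_incl] := Nat.sqrt_spec n (Nat.le_0_l n).
Qed.

Lemma maxn2_sqrt_bounds n : 0 < n ->
  (/ 2 * sqrt (INR n) <= INR (maxn 2 (Nat.sqrt n)) <= 2 * sqrt (INR n))%R.
Proof.
move=> n_gt0.
have sqrt_gt0 : 0 < Nat.sqrt n by apply/leP; apply: (Nat.sqrt_le_mono 1); apply/leP.
have lower : (INR (Nat.sqrt n).+1 <= INR (2 * maxn 2 (Nat.sqrt n)))%R.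
  by apply/le_INR/leP; lia.
have upper : (INR (maxn 2 (Nat.sqrt n)) <= INR (2 * Nat.sqrt n))%R.
  by apply/le_INR/leP; lia.
rewrite !mult_INR [INR 2]/= in lower upper.
have := INR_sqrt_le n; have := sqrt_le_INR_sqrt_succ n; lra.
Qed.

Theorem theorem1p4 :
  exists c C : R, (0 < c)%R /\ (0 < C)%R /\
    forall n : nat, (1 <= n)%N ->
      exists S : {set F2n n},
        (c * sqrt (INR n) <= INR (card_Delta S))%R /\
        (INR (card_Delta S) <= C * sqrt (INR n))%R /\
        rho S = 2.
Proof.
exists (/ 2)%R, 2%R; split; first lra; split; first lra.
move=> n n_gt0; have [S [card_DeltaS rhoS]] := exists_chain_set n_gt0.
by exists S; rewrite card_DeltaS; have [] := maxn2_sqrt_bounds n_gt0.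
Qed.
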